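(* Let $f$ be the density on $\mathbb{R}$ given, for some $k_1,k_2>0$, by $$\log f(x)=\begin{cases}-\frac{x^2}{2}-c, & -k_1\le x\le k_2,\\ k_1x+\frac{k_1^2}{2}-c, & x<-k_1,\\ -k_2x+\frac{k_2^2}{2}-c,& x>k_2,\end{cases}$$ with $c=c(k_1,k_2)$ chosen so that $\int f=1$, and let $F$ be its distribution function. For $\alpha,\beta\in(0,1)$ with $\alpha+\beta<1$ define $$\sigma^2(\alpha,\beta)=\frac{1}{(1-\alpha-\beta)^2}\int_\alpha^{1-\beta}\!\int_\alpha^{1-\beta}\frac{\min(s,t)-st}{f(F^{-1}(s))f(F^{-1}(t))}\,ds\,dt.$$ Then $\sigma^2(\alpha,\beta)$ is strictly convex in a neighborhood of $(\alpha,\beta)=(F(-k_1),\,1-F(k_2))$. *)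

From Stdlib Require Import Reals Lra ClassicalEpsilon.
From Coquelicot Require Import Coquelicot.
Open Scope R_scope.

(* Unnormalized log-density (log f + c) of the Huber least-favourable density. *)
Definition hlog (k1 k2 x : R) : R :=
  if Rle_dec (- k1) x then
    (if Rle_dec x k2 then - x ^ 2 / 2 else - k2 * x + k2 ^ 2 / 2)
  else k1 * x + k1 ^ 2 / 2.

Definition hconst (k1 k2 : R) : R :=
  ln (RInt_gen (fun x => exp (hlog k1 k2 x))
        (Rbar_locally m_infty) (Rbar_locally p_infty)).

Definition hdens (k1 k2 x : R) : R := exp (hlog k1 k2 x - hconst k1 k2).

Definition hcdf (k1 k2 x : R) : R :=
  RInt_gen (hdens k1 k2) (Rbar_locally m_infty) (at_point x).

(* Inverse F^{-1}(s): a (the, since F is strictly increasing) x with F x = s. *)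
Definition hquant (k1 k2 s : R) : R :=
  epsilon (inhabits 0) (fun x => hcdf k1 k2 x = s).

Definition sigma2 (k1 k2 a b : R) : R :=
  / (1 - a - b) ^ 2 *
  RInt (fun s => RInt (fun t =>
          (Rmin s t - s * t) /
          (hdens k1 k2 (hquant k1 k2 s) * hdens k1 k2 (hquant k1 k2 t)))
        a (1 - b)) a (1 - b).

(* Substituting s = F x and t = F y turns sigma2(a, b) into N(a, b) / (1 - a - b)^2,
   where N is the double integral of min(F x, F y) - F x F y over [Q a, Q (1 - b)]^2,
   Q = F^-1; N has a closed form in the primitives of F and x F.  Since
   Q' = 1 / f(Q), the second derivatives of sigma2 along any segment are explicit.
   At (a, b) = (F(-k1), 1 - F(k2)) one has Q a = -k1, Q (1 - b) = k2,
   int_{-k1}^{k2} F = k2 and int_{-k1}^{k2} (1 - F) = k1, and the Hessian becomes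
   2 / D^2 times a matrix in p = f(-k1), q = f(k2) and D = F(k2) - F(-k1).  Its
   positive definiteness reduces to (p - q)^2 < D (D - k1 p - k2 q), which is the
   strict Cauchy-Schwarz inequality for the moments of order 0, 1, 2 of f on
   [-k1, k2], computable because f' = -x f there.  By continuity the Hessian stays
   positive definite nearby, and a positive second derivative along segments gives
   strict convexity. *)

From Stdlib Require Import Reals Lra ClassicalEpsilon.
From Coquelicot Require Import Coquelicot.
Open Scope R_scope.

(* Coquelicot states its algebraic lemmas with the [plus]/[scal] operations of
   normed modules; these specializations to [R] can be used by [apply] and [rewrite]. *)
Lemma continuous_Rplus {U : UniformSpace} (f g : U -> R) x :
  continuous f x -> continuous g x -> continuous (fun y => f y + g y) x.
Proof. exact (continuous_plus f g x). Qed.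

Lemma continuous_Rminus {U : UniformSpace} (f g : U -> R) x :
  continuous f x -> continuous g x -> continuous (fun y => f y - g y) x.
Proof.
  intros Hf Hg. apply continuous_Rplus; [exact Hf|exact (continuous_opp g x Hg)].
Qed.

Lemma continuous_Rmult {U : UniformSpace} (f g : U -> R) x :
  continuous f x -> continuous g x -> continuous (fun y => f y * g y) x.
Proof. exact (continuous_mult f g x). Qed.

Lemma continuous_Rdiv {U : UniformSpace} (f g : U -> R) x :
  continuous f x -> continuous g x -> g x <> 0 -> continuous (fun y => f y / g y) x.
Proof.
  intros Hf Hg Hg0. apply continuous_Rmult; [exact Hf|].
  apply (continuous_comp g Rinv); [exact Hg|exact (continuous_Rinv _ Hg0)].
Qed.

Lemma continuous_pow {U : UniformSpace} (f : U -> R) x n :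
  continuous f x -> continuous (fun y => f y ^ n) x.
Proof.
  intros Hf. induction n as [|n IH]; [apply continuous_const|].
  exact (continuous_Rmult _ _ x Hf IH).
Qed.

Lemma continuous_of_lipschitz (phi : R -> R) x K :
  (forall y, Rabs (phi y - phi x) <= K * Rabs (y - x)) -> continuous phi x.
Proof.
  intros Hlip. apply continuity_pt_filterlim. intros eps Heps.
  assert (HK : 0 <= K).
  { specialize (Hlip (x + 1)). replace (x + 1 - x) with 1 in Hlip by ring.
    rewrite Rabs_R1 in Hlip. pose proof (Rabs_pos (phi (x + 1) - phi x)). lra. }
  exists (eps / (K + 1)). split; [apply Rdiv_lt_0_compat; lra|].
  intros y [_ Hy]. simpl in *. unfold R_dist in *.
  apply Rle_lt_trans with ((K + 1) * Rabs (y - x)).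
  - pose proof (Hlip y). pose proof (Rabs_pos (y - x)). nra.
  - apply Rmult_lt_reg_l with (/ (K + 1)); [apply Rinv_0_lt_compat; lra|].
    rewrite <- Rmult_assoc, Rinv_l, Rmult_1_l by lra. lra.
Qed.

Lemma continuous_Rmin_l (c x : R) : continuous (fun y => Rmin c y) x.
Proof.
  apply continuous_of_lipschitz with 1. intros y. rewrite Rmult_1_l.
  unfold Rmin. destruct (Rle_dec c y), (Rle_dec c x); unfold Rabs;
    repeat destruct Rcase_abs; lra.
Qed.

Ltac auto_continuous :=
  repeat match goal with
  | |- continuous (fun _ => ?c) _ => apply continuous_const
  | |- continuous (fun y => y) _ => apply continuous_id
  | |- continuous (fun _ => _ + _) _ => apply continuous_Rplus
  | |- continuous (fun _ => _ - _) _ => apply continuous_Rminus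
  | |- continuous (fun _ => _ * _) _ => apply continuous_Rmult
  | |- continuous (fun _ => _ / _) _ => apply continuous_Rdiv
  | |- continuous (fun _ => _ ^ _) _ => apply continuous_pow
  | |- continuous (Rplus ?c) _ => apply (continuous_Rplus (fun _ => c) (fun y => y))
  | |- continuous (Rminus ?c) _ => apply (continuous_Rminus (fun _ => c) (fun y => y))
  | |- continuous (Rmult ?c) _ => apply (continuous_Rmult (fun _ => c) (fun y => y))
  | |- continuous fst _ => apply continuous_fst
  | |- continuous snd _ => apply continuous_snd
  | |- continuous (fun y => fst y) _ => apply continuous_fst
  | |- continuous (fun y => snd y) _ => apply continuous_snd
  end.

Lemma continuous2_box (G : R * R -> R) a0 b0 eta : continuous G (a0, b0) -> 0 < eta ->
  exists del, 0 < del /\ forall a b, Rabs (a - a0) < del -> Rabs (b - b0) < del ->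
    Rabs (G (a, b) - G (a0, b0)) < eta.
Proof.
  intros HG Heta.
  destruct (HG (ball (G (a0, b0)) eta)) as [del Hdel].
  { exists (mkposreal _ Heta). intros y Hy. exact Hy. }
  exists del. split; [apply cond_pos|]. intros a b Ha Hb.
  apply (Hdel (a, b)). split; assumption.
Qed.

Tactic Notation "rewrite_derive" constr(H) :=
  lazymatch type of H with
  | is_derive ?f ?x ?l =>
      let E := fresh in
      assert (E : Derive (fun t => f t) x = l) by exact (is_derive_unique _ _ _ H);
      rewrite E; clear E
  end.

Ltac solve_nonzero :=
  repeat match goal with
  | |- _ * _ <> 0 => apply Rmult_integral_contrapositive_currified
  | |- 1 <> 0 => exact R1_neq_R0
  | |- _ <> 0 => assumption
  end.

Lemma is_derive_of_quadratic_error (phi : R -> R) x l K :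
  (forall y, Rabs (phi y - phi x - l * (y - x)) <= K * (y - x) ^ 2) ->
  is_derive phi x l.
Proof.
  intros Herr. apply is_derive_Reals. intros eps Heps.
  assert (HK : 0 <= K).
  { specialize (Herr (x + 1)). replace (x + 1 - x) with 1 in Herr by ring.
    pose proof (Rabs_pos (phi (x + 1) - phi x - l * 1)). lra. }
  assert (Hd : 0 < eps / (K + 1)) by (apply Rdiv_lt_0_compat; lra).
  exists (mkposreal _ Hd). intros h Hh0 Hh. simpl in Hh.
  specialize (Herr (x + h)). replace (x + h - x) with h in Herr by ring.
  replace ((phi (x + h) - phi x) / h - l) with ((phi (x + h) - phi x - l * h) / h)
    by (field; exact Hh0).
  assert (Hh' : 0 < Rabs h) by (apply Rabs_pos_lt; exact Hh0).
  unfold Rdiv. rewrite Rabs_mult, Rabs_inv.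
  apply Rle_lt_trans with (K * Rabs h).
  - rewrite <- (pow2_abs h) in Herr.
    apply Rmult_le_reg_r with (Rabs h); [exact Hh'|].
    rewrite Rmult_assoc, Rinv_l, Rmult_1_r by lra. nra.
  - apply Rle_lt_trans with ((K + 1) * Rabs h); [nra|].
    replace eps with ((K + 1) * (eps / (K + 1))) by (field; lra).
    apply Rmult_lt_compat_l; lra.
Qed.

Lemma is_derive_lin_comb (u v : R -> R) c1 c2 du dv t :
  is_derive u t du -> is_derive v t dv ->
  is_derive (fun t => c1 * u t + c2 * v t) t (c1 * du + c2 * dv).
Proof.
  intros Hu Hv. auto_derive; [repeat split; eexists; eassumption|].
  rewrite_derive Hu. rewrite_derive Hv. ring.
Qed.

Lemma is_derive_div_sq (n D : R -> R) n' c t :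
  is_derive n t n' -> is_derive D t (- c) -> D t <> 0 ->
  is_derive (fun t => n t / D t ^ 2) t (n' / D t ^ 2 + 2 * c * n t / D t ^ 3).
Proof.
  intros Hn HD HD0. auto_derive; [repeat split; try (eexists; eassumption); solve_nonzero|].
  rewrite_derive Hn. rewrite_derive HD. field. exact HD0.
Qed.

Lemma is_derive_div_sq_2 (n n' D : R -> R) n'' c t :
  is_derive n t (n' t) -> is_derive n' t n'' -> is_derive D t (- c) -> D t <> 0 ->
  is_derive (fun t => n' t / D t ^ 2 + 2 * c * n t / D t ^ 3) t
    (n'' / D t ^ 2 + 4 * c * n' t / D t ^ 3 + 6 * c ^ 2 * n t / D t ^ 4).
Proof.
  intros Hn Hn' HD HD0. auto_derive; [repeat split; try (eexists; eassumption); solve_nonzero|].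
  rewrite_derive Hn. rewrite_derive Hn'. rewrite_derive HD. field. exact HD0.
Qed.

Lemma Rabs_inv_sub_le rho d : d <> 0 ->
  Rabs d / 2 < Rabs rho -> Rabs (/ rho - / d) <= 2 * Rabs (rho - d) / Rabs d ^ 2.
Proof.
  intros Hd0 Hrho.
  assert (Hd : 0 < Rabs d) by (apply Rabs_pos_lt; exact Hd0).
  assert (Hr0 : rho <> 0) by (intros ->; rewrite Rabs_R0 in Hrho; lra).
  replace (/ rho - / d) with ((d - rho) / (rho * d)) by (field; auto).
  replace (2 * Rabs (rho - d) / Rabs d ^ 2) with (Rabs (d - rho) * / (Rabs d / 2 * Rabs d))
    by (rewrite Rabs_minus_sym; field; lra).
  unfold Rdiv. rewrite Rabs_mult, Rabs_inv, Rabs_mult.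
  apply Rmult_le_compat_l; [apply Rabs_pos|].
  apply Rinv_le_contravar; [apply Rmult_lt_0_compat; lra|].
  apply Rmult_le_compat_r; lra.
Qed.

(* The difference quotient of [Q] at [s] is the reciprocal of the difference
   quotient of [F] between [Q s] and [Q (s + h)]. *)
Lemma is_derive_inverse (F Q : R -> R) s d r : 0 < r ->
  (forall s', Rabs (s' - s) < r -> F (Q s') = s') ->
  continuous Q s -> is_derive F (Q s) d -> d <> 0 -> is_derive Q s (/ d).
Proof.
  intros Hr HFQ HQ HF Hd. apply is_derive_Reals. apply is_derive_Reals in HF.
  apply continuity_pt_filterlim in HQ.
  intros eps Heps.
  assert (Hd' : 0 < Rabs d) by (apply Rabs_pos_lt; exact Hd).
  set (e := Rmin (Rabs d / 2) (eps * Rabs d ^ 2 / 4)).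
  assert (He : 0 < e).
  { apply Rmin_glb_lt; [lra|]. pose proof (pow_lt _ 2 Hd'). nra. }
  assert (He1 : e <= Rabs d / 2) by apply Rmin_l.
  assert (He2 : e <= eps * Rabs d ^ 2 / 4) by apply Rmin_r.
  destruct (HF e He) as [d1 Hd1].
  destruct (HQ d1 (cond_pos d1)) as [d2 [Hd2 HQd]].
  assert (Hdel : 0 < Rmin d2 r) by (apply Rmin_glb_lt; assumption).
  exists (mkposreal _ Hdel). intros h Hh0 Hh. simpl in Hh.
  assert (Hhd2 : Rabs h < d2) by (eapply Rlt_le_trans; [exact Hh|apply Rmin_l]).
  assert (Hhr : Rabs h < r) by (eapply Rlt_le_trans; [exact Hh|apply Rmin_r]).
  assert (E0 : F (Q s) = s) by (apply HFQ; rewrite Rminus_diag, Rabs_R0; exact Hr).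
  assert (E1 : F (Q (s + h)) = s + h)
    by (apply HFQ; replace (s + h - s) with h by ring; exact Hhr).
  set (k := Q (s + h) - Q s).
  assert (Hk0 : k <> 0).
  { intros Hk. assert (Q (s + h) = Q s) by (unfold k in Hk; lra). rewrite H in E1. lra. }
  assert (Hk : Rabs k < d1).
  { apply (HQd (s + h)). split; [split; [exact I|lra]|].
    simpl. unfold R_dist. replace (s + h - s) with h by ring. exact Hhd2. }
  specialize (Hd1 k Hk0 Hk).
  replace (Q s + k) with (Q (s + h)) in Hd1 by (unfold k; ring).
  rewrite E0, E1 in Hd1. replace (s + h - s) with h in Hd1 by ring.
  assert (Hrho : Rabs d / 2 < Rabs (h / k)).
  { pose proof (Rabs_triang_inv d (d - h / k)). replace (d - (d - h / k)) with (h / k) in H by ring.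
    rewrite Rabs_minus_sym in H. lra. }
  replace (k / h) with (/ (h / k)) by (field; auto).
  eapply Rle_lt_trans; [exact (Rabs_inv_sub_le _ _ Hd Hrho)|].
  apply Rmult_lt_reg_r with (Rabs d ^ 2); [apply pow_lt; exact Hd'|].
  unfold Rdiv. rewrite Rmult_assoc, Rinv_l, Rmult_1_r by (apply pow_nonzero; lra).
  lra.
Qed.

Lemma convex_strict_of_derive2_pos (h h' h'' : R -> R) t : 0 < t < 1 ->
  (forall s, 0 <= s <= 1 -> is_derive h s (h' s) /\ is_derive h' s (h'' s) /\ 0 < h'' s) ->
  h t < t * h 1 + (1 - t) * h 0.
Proof.
  intros Ht Hh.
  destruct (MVT_cor2 h h' 0 t) as [c1 [E1 Hc1]]; [lra| |].
  { intros c Hc. apply is_derive_Reals, Hh. lra. }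
  destruct (MVT_cor2 h h' t 1) as [c2 [E2 Hc2]]; [lra| |].
  { intros c Hc. apply is_derive_Reals, Hh. lra. }
  destruct (MVT_cor2 h' h'' c1 c2) as [c3 [E3 Hc3]]; [lra| |].
  { intros c Hc. apply is_derive_Reals, Hh. lra. }
  assert (0 < h'' c3) by (apply Hh; lra).
  assert (h' c1 < h' c2) by nra.
  assert (0 < t * (1 - t)) by nra.
  nra.
Qed.

Lemma RInt_ext_R (f g : R -> R) a b :
  (forall x, Rmin a b < x < Rmax a b -> f x = g x) -> RInt f a b = RInt g a b :> R.
Proof. exact (RInt_ext f g a b). Qed.

Lemma RInt_Rplus (f g : R -> R) a b : ex_RInt f a b -> ex_RInt g a b ->
  RInt (fun x => f x + g x) a b = RInt f a b + RInt g a b :> R.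
Proof. exact (RInt_plus f g a b). Qed.

Lemma RInt_Rminus (f g : R -> R) a b : ex_RInt f a b -> ex_RInt g a b ->
  RInt (fun x => f x - g x) a b = RInt f a b - RInt g a b :> R.
Proof. exact (RInt_minus f g a b). Qed.

Lemma RInt_Rmult_l (f : R -> R) c a b : ex_RInt f a b ->
  RInt (fun x => c * f x) a b = c * RInt f a b :> R.
Proof. exact (RInt_scal f a b c). Qed.

Lemma ex_RInt_cont (phi : R -> R) a b : (forall x, continuous phi x) -> ex_RInt phi a b.
Proof. intros Hphi. apply (@ex_RInt_continuous R_CompleteNormedModule). auto. Qed.

Lemma is_derive_RInt_upper (phi : R -> R) a x :
  (forall y, continuous phi y) -> is_derive (fun x => RInt phi a x) x (phi x).
Proof.
  intros Hphi. auto_derive; [|ring].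
  split; [apply ex_RInt_cont, Hphi|].
  split; [apply filter_forall; intros y; apply continuity_pt_filterlim, Hphi|exact I].
Qed.

Lemma RInt_antiderivative (Phi phi : R -> R) a b :
  (forall x, Rmin a b <= x <= Rmax a b -> is_derive Phi x (phi x)) ->
  (forall x, Rmin a b <= x <= Rmax a b -> continuous phi x) ->
  RInt phi a b = Phi b - Phi a :> R.
Proof. intros HPhi Hphi. apply is_RInt_unique. exact (is_RInt_derive Phi phi a b HPhi Hphi). Qed.

Lemma RInt_sq_weight_pos (w : R -> R) c d lam : c < d ->
  (forall x, continuous w x) -> (forall x, 0 < w x) ->
  0 < RInt (fun x => (x - lam) ^ 2 * w x) c d.
Proof.
  intros Hcd Hwc Hw.
  assert (Hcont : forall x, continuous (fun x => (x - lam) ^ 2 * w x) x)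
    by (intros x; auto_continuous; apply Hwc).
  assert (Hpos : forall a b, a < b -> lam <= a \/ b <= lam ->
            0 < RInt (fun x => (x - lam) ^ 2 * w x) a b).
  { intros a b Hab Hlam. apply RInt_gt_0; [exact Hab| |intros; apply Hcont].
    intros x Hx. apply Rmult_lt_0_compat; [apply pow2_gt_0; lra|apply Hw]. }
  destruct (Rle_or_lt lam c); [apply Hpos; lra|].
  destruct (Rle_or_lt d lam); [apply Hpos; lra|].
  rewrite <- (RInt_Chasles _ c lam d) by (apply ex_RInt_cont; exact Hcont).
  exact (Rplus_lt_0_compat _ _ (Hpos c lam ltac:(lra) ltac:(lra))
                               (Hpos lam d ltac:(lra) ltac:(lra))).
Qed.

(* Cauchy-Schwarz for the moments of a positive weight, strict because [x] is
   not constant on [c, d]. *)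
Lemma RInt_cauchy_schwarz_strict (w : R -> R) c d : c < d ->
  (forall x, continuous w x) -> (forall x, 0 < w x) ->
  RInt (fun x => x * w x) c d ^ 2 < RInt w c d * RInt (fun x => x ^ 2 * w x) c d.
Proof.
  intros Hcd Hwc Hw.
  set (m0 := RInt w c d). set (m1 := RInt (fun x => x * w x) c d).
  set (m2 := RInt (fun x => x ^ 2 * w x) c d).
  assert (Hm0 : 0 < m0) by (apply RInt_gt_0; auto).
  pose proof (RInt_sq_weight_pos w c d (m1 / m0) Hcd Hwc Hw) as Hsq.
  rewrite (RInt_ext_R _ (fun x => (x ^ 2 * w x + (-2 * (m1 / m0)) * (x * w x))
                                 + (m1 / m0) ^ 2 * w x)) in Hsq
    by (intros; ring).
  assert (Hex : forall phi : R -> R, (forall x, continuous phi x) -> ex_RInt phi c d)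
    by (intros; apply ex_RInt_cont; auto).
  rewrite RInt_Rplus, RInt_Rplus, !RInt_Rmult_l in Hsq
    by (apply Hex; intros; auto_continuous; apply Hwc).
  fold m0 m1 m2 in Hsq.
  replace (m2 + -2 * (m1 / m0) * m1 + (m1 / m0) ^ 2 * m0) with ((m0 * m2 - m1 ^ 2) / m0)
    in Hsq by (field; lra).
  apply Rmult_lt_compat_r with (r := m0) in Hsq; [|exact Hm0].
  unfold Rdiv in Hsq. rewrite Rmult_0_l, Rmult_assoc, Rinv_l, Rmult_1_r in Hsq by lra.
  lra.
Qed.

(** * Quadratic forms in two variables *)

(* The smaller eigenvalue of a positive definite [[sx, sz], [sz, sy]] is at least det/trace. *)
Lemma quad_form_lower_bound sx sy sz da db :
  0 < sx -> 0 < sy -> sz ^ 2 < sx * sy ->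
  (sx * sy - sz ^ 2) / (sx + sy) * (da ^ 2 + db ^ 2)
    <= sx * da ^ 2 + 2 * sz * da * db + sy * db ^ 2.
Proof.
  intros Hx Hy Hdet. set (mu := (sx * sy - sz ^ 2) / (sx + sy)).
  assert (Edet : (sx - mu) * (sy - mu) - sz ^ 2 = mu ^ 2) by (unfold mu; field; lra).
  assert (Ex : sx - mu = (sx ^ 2 + sz ^ 2) / (sx + sy)) by (unfold mu; field; lra).
  assert (Hxmu : 0 < sx - mu) by (rewrite Ex; apply Rdiv_lt_0_compat; nra).
  enough (0 <= (sx - mu) * da ^ 2 + 2 * sz * da * db + (sy - mu) * db ^ 2) by lra.
  apply Rmult_le_reg_l with (sx - mu); [exact Hxmu|]. rewrite Rmult_0_r.
  replace ((sx - mu) * ((sx - mu) * da ^ 2 + 2 * sz * da * db + (sy - mu) * db ^ 2))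
    with (((sx - mu) * da + sz * db) ^ 2 + ((sx - mu) * (sy - mu) - sz ^ 2) * db ^ 2) by ring.
  rewrite Edet. apply Rplus_le_le_0_compat; [apply pow2_ge_0|apply Rmult_le_pos; apply pow2_ge_0].
Qed.

Lemma quad_form_perturb A B C sx sy sz eta da db :
  Rabs (A - sx) < eta -> Rabs (B - sy) < eta -> Rabs (C - sz) < eta ->
  sx * da ^ 2 + 2 * sz * da * db + sy * db ^ 2 - 2 * eta * (da ^ 2 + db ^ 2)
    <= A * da ^ 2 + 2 * C * da * db + B * db ^ 2.
Proof.
  intros HA HB HC.
  apply Rabs_def2 in HA, HB, HC.
  assert (Hab : Rabs (2 * da * db) <= da ^ 2 + db ^ 2).
  { pose proof (pow2_ge_0 (da - db)). pose proof (pow2_ge_0 (da + db)).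
    unfold Rabs; destruct Rcase_abs; nra. }
  assert (Hcross : - (eta * (da ^ 2 + db ^ 2)) <= (C - sz) * (2 * da * db)).
  { assert (Rabs ((C - sz) * (2 * da * db)) <= eta * (da ^ 2 + db ^ 2)).
    { rewrite Rabs_mult. apply Rmult_le_compat; try apply Rabs_pos; try exact Hab.
      apply Rabs_le; lra. }
    apply Rabs_le_between in H. lra. }
  pose proof (pow2_ge_0 da). pose proof (pow2_ge_0 db). nra.
Qed.

Lemma Rabs_convex_comb_lt x1 x2 x0 eps t :
  Rabs (x1 - x0) < eps -> Rabs (x2 - x0) < eps -> 0 <= t <= 1 ->
  Rabs (x2 + t * (x1 - x2) - x0) < eps.
Proof.
  intros H1 H2 Ht. apply Rabs_def2 in H1, H2.
  destruct (Req_dec t 1) as [->|Ht1]; apply Rabs_def1; nra.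
Qed.

Lemma sum_sq_sub_pos a1 b1 a2 b2 : (a1, b1) <> (a2, b2) -> 0 < (a1 - a2) ^ 2 + (b1 - b2) ^ 2.
Proof.
  intros Hne. pose proof (pow2_ge_0 (a1 - a2)). pose proof (pow2_ge_0 (b1 - b2)).
  destruct (Req_dec a1 a2) as [Ha|Ha].
  - destruct (Req_dec b1 b2) as [Hb|Hb]; [subst; contradiction|].
    pose proof (pow2_gt_0 (b1 - b2) ltac:(lra)). lra.
  - pose proof (pow2_gt_0 (a1 - a2) ltac:(lra)). lra.
Qed.

(* [(1 - p / k1) / (k1 * p) - 1 / D], [(1 - q / k2) / (k2 * q) - 1 / D] and
   [1 / (k1 * k2) - 1 / D] are the Hessian entries of [sigma2] at [(F (-k1), 1 - F k2)]
   divided by [2 / D ^ 2], where [p = f (-k1)], [q = f k2] and [D = F k2 - F (-k1)];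
   [p / k1 + D + q / k2 = 1] is [alpha + (1 - alpha - beta) + beta = 1]. *)
Lemma star_form_det_pos k1 k2 p q D :
  0 < k1 -> 0 < k2 -> 0 < p -> 0 < q -> 0 < D ->
  p / k1 + D + q / k2 = 1 -> (p - q) ^ 2 < D * (D - k1 * p - k2 * q) ->
  (1 / (k1 * k2) - 1 / D) ^ 2
    < ((1 - p / k1) / (k1 * p) - 1 / D) * ((1 - q / k2) / (k2 * q) - 1 / D).
Proof.
  intros Hk1 Hk2 Hp Hq HD Hsum Hcs.
  assert (Hdet : ((1 - p / k1) / (k1 * p) - 1 / D) * ((1 - q / k2) / (k2 * q) - 1 / D)
                 - (1 / (k1 * k2) - 1 / D) ^ 2
               = (p / k1 + D + q / k2) * (D * (D - k1 * p - k2 * q) - (p - q) ^ 2)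
                 / (k1 * k2 * p * q * D)).
  { replace (1 - p / k1) with (D + q / k2) by lra.
    replace (1 - q / k2) with (D + p / k1) by lra.
    replace (1 / D) with ((p / k1 + D + q / k2) / D) by (rewrite Hsum; reflexivity).
    field. repeat split; lra. }
  rewrite Hsum, Rmult_1_l in Hdet.
  assert (0 < (D * (D - k1 * p - k2 * q) - (p - q) ^ 2) / (k1 * k2 * p * q * D)).
  { apply Rdiv_lt_0_compat; [lra|]. repeat apply Rmult_lt_0_compat; assumption. }
  lra.
Qed.

Lemma star_form_diag_pos k1 k2 p q D :
  0 < k1 -> 0 < k2 -> 0 < p -> 0 < q -> 0 < D ->
  p / k1 + D + q / k2 = 1 -> (p - q) ^ 2 < D * (D - k1 * p - k2 * q) -> p <= q ->
  0 < (1 - p / k1) / (k1 * p) - 1 / D.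
Proof.
  intros Hk1 Hk2 Hp Hq HD Hsum Hcs Hpq.
  assert (Hgap : 0 < D - k1 * p - k2 * q) by (pose proof (pow2_ge_0 (p - q)); nra).
  assert (Hx : ((1 - p / k1) / (k1 * p) - 1 / D) * (k1 * p * D)
               = (D - k1 * p) * (D + q / k2) - p ^ 2).
  { replace (1 - p / k1) with (D + q / k2) by lra.
    replace (1 / D) with ((p / k1 + D + q / k2) / D) by (rewrite Hsum; reflexivity).
    field. repeat split; lra. }
  assert (Hqk : q ^ 2 < q / k2 * (D - k1 * p)).
  { replace (q / k2 * (D - k1 * p)) with (q ^ 2 + q / k2 * (D - k1 * p - k2 * q)) by (field; lra).
    assert (0 < q / k2 * (D - k1 * p - k2 * q))
      by (apply Rmult_lt_0_compat; [apply Rdiv_lt_0_compat|]; lra).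
    lra. }
  assert (0 < ((1 - p / k1) / (k1 * p) - 1 / D) * (k1 * p * D)).
  { rewrite Hx. assert (0 <= q * (D * k2 + 2 * (q - p))) by (apply Rmult_le_pos; nra). nra. }
  assert (0 < k1 * p * D) by (repeat apply Rmult_lt_0_compat; assumption).
  nra.
Qed.

Lemma star_form_pos_def k1 k2 p q D :
  0 < k1 -> 0 < k2 -> 0 < p -> 0 < q -> 0 < D ->
  p / k1 + D + q / k2 = 1 -> (p - q) ^ 2 < D * (D - k1 * p - k2 * q) ->
  0 < (1 - p / k1) / (k1 * p) - 1 / D /\ 0 < (1 - q / k2) / (k2 * q) - 1 / D /\
  (1 / (k1 * k2) - 1 / D) ^ 2
    < ((1 - p / k1) / (k1 * p) - 1 / D) * ((1 - q / k2) / (k2 * q) - 1 / D).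
Proof.
  intros Hk1 Hk2 Hp Hq HD Hsum Hcs.
  pose proof (star_form_det_pos k1 k2 p q D Hk1 Hk2 Hp Hq HD Hsum Hcs) as Hdet.
  pose proof (pow2_ge_0 (1 / (k1 * k2) - 1 / D)).
  destruct (Rle_dec p q) as [Hpq|Hpq].
  - pose proof (star_form_diag_pos k1 k2 p q D Hk1 Hk2 Hp Hq HD Hsum Hcs Hpq).
    repeat split; nra.
  - assert (Hsum' : q / k2 + D + p / k1 = 1) by lra.
    assert (Hcs' : (q - p) ^ 2 < D * (D - k2 * q - k1 * p)) by nra.
    pose proof (star_form_diag_pos k2 k1 q p D Hk2 Hk1 Hq Hp HD Hsum' Hcs' ltac:(lra)).
    repeat split; nra.
Qed.

Definition trim_admissible a b := 0 < a /\ 0 < b /\ a + b < 1.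

Section Huber.

Variables k1 k2 : R.
Hypotheses (hk1 : 0 < k1) (hk2 : 0 < k2).

Local Notation f := (hdens k1 k2).
Local Notation F := (hcdf k1 k2).
Local Notation Q := (hquant k1 k2).

(** * The density, its distribution function and its quantile function *)

Definition clamp x := Rmax (- k1) (Rmin x k2).

Ltac case_clamp := unfold clamp, Rmax, Rmin; repeat destruct Rle_dec.

Lemma clamp_left x : x <= - k1 -> clamp x = - k1.
Proof. case_clamp; lra. Qed.

Lemma clamp_mid x : - k1 <= x <= k2 -> clamp x = x.
Proof. case_clamp; lra. Qed.

Lemma clamp_right x : k2 <= x -> clamp x = k2.
Proof. case_clamp; lra. Qed.

Lemma hlog_clamp x : hlog k1 k2 x = clamp x ^ 2 / 2 - clamp x * x.
Proof. unfold hlog. case_clamp; field || lra. Qed.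

Lemma continuous_clamp x : continuous clamp x.
Proof.
  apply continuous_of_lipschitz with 1. intros y. rewrite Rmult_1_l.
  case_clamp; unfold Rabs; repeat destruct Rcase_abs; lra.
Qed.

(* [hlog] is C^1 with the 1-Lipschitz derivative [- clamp]. *)
Lemma hlog_taylor x y :
  Rabs (hlog k1 k2 y - hlog k1 k2 x - - clamp x * (y - x)) <= 1 * (y - x) ^ 2.
Proof.
  rewrite !hlog_clamp.
  replace (clamp y ^ 2 / 2 - clamp y * y - (clamp x ^ 2 / 2 - clamp x * x) - - clamp x * (y - x))
    with ((clamp y - clamp x) * ((clamp y + clamp x) / 2 - y)) by field.
  rewrite Rabs_mult. pose proof (pow2_ge_0 (y - x)).
  case_clamp; unfold Rabs; repeat destruct Rcase_abs; try nra.
  all: match goal with |- ?a * _ <= _ => replace a with 0 by ring end; lra.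
Qed.

Lemma is_derive_hlog x : is_derive (hlog k1 k2) x (- clamp x).
Proof. exact (is_derive_of_quadratic_error _ x _ 1 (hlog_taylor x)). Qed.

Definition hexp x := exp (hlog k1 k2 x).

Lemma hexp_pos x : 0 < hexp x.
Proof. apply exp_pos. Qed.

Lemma is_derive_hexp x : is_derive hexp x (- clamp x * hexp x).
Proof.
  apply (is_derive_comp exp (hlog k1 k2) x (exp (hlog k1 k2 x)) (- clamp x));
    [apply is_derive_exp|apply is_derive_hlog].
Qed.

Lemma continuous_hexp x : continuous hexp x.
Proof. apply (ex_derive_continuous hexp). eexists. apply is_derive_hexp. Qed.

Lemma hexp_left x : x <= - k1 -> hexp x = exp (k1 * x + k1 ^ 2 / 2).
Proof. intros Hx. unfold hexp. rewrite hlog_clamp, clamp_left by exact Hx. f_equal. field. Qed.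

Lemma hexp_right x : k2 <= x -> hexp x = exp (- k2 * x + k2 ^ 2 / 2).
Proof. intros Hx. unfold hexp. rewrite hlog_clamp, clamp_right by exact Hx. f_equal. field. Qed.

(* [hexp (- k1) / k1] and [hexp k2 / k2] are the integrals of [hexp] over the two tails. *)
Definition hexp_prim x : R := hexp (- k1) / k1 + RInt hexp (- k1) x.

Definition hmass := hexp_prim k2 + hexp k2 / k2.

Lemma is_derive_hexp_prim x : is_derive hexp_prim x (hexp x).
Proof.
  replace (hexp x) with (0 + hexp x) by ring.
  apply (is_derive_plus (fun _ => hexp (- k1) / k1) (fun y => RInt hexp (- k1) y)).
  - apply (is_derive_const (K := R_AbsRing) (V := R_NormedModule)).
  - apply is_derive_RInt_upper, continuous_hexp.
Qed.

Lemma hexp_prim_left x : x <= - k1 -> hexp_prim x = hexp x / k1.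
Proof.
  intros Hx. unfold hexp_prim.
  rewrite (RInt_antiderivative (fun y => hexp y / k1)); [field; lra| |].
  - intros y Hy. rewrite Rmin_right, Rmax_left in Hy by lra.
    auto_derive; [eexists; apply is_derive_hexp|].
    rewrite_derive (is_derive_hexp y). rewrite clamp_left by lra. field. lra.
  - intros y _. apply continuous_hexp.
Qed.

Lemma hexp_prim_right x : k2 <= x -> hexp_prim x = hmass - hexp x / k2.
Proof.
  intros Hx. unfold hmass, hexp_prim.
  rewrite <- (RInt_Chasles hexp (- k1) k2 x) by (apply ex_RInt_cont, continuous_hexp).
  rewrite (RInt_antiderivative (fun y => - hexp y / k2) hexp k2 x).
  - unfold plus; simpl. field. lra.
  - intros y Hy. rewrite Rmin_left, Rmax_right in Hy by lra.
    auto_derive; [eexists; apply is_derive_hexp|].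
    rewrite_derive (is_derive_hexp y). rewrite clamp_right by lra. field. lra.
  - intros y _. apply continuous_hexp.
Qed.

Lemma hexp_prim_pos x : 0 < hexp_prim x.
Proof.
  destruct (Rle_or_lt x (- k1)) as [Hx|Hx].
  - rewrite hexp_prim_left by exact Hx. apply Rdiv_lt_0_compat; [apply hexp_pos|exact hk1].
  - unfold hexp_prim.
    assert (0 <= RInt hexp (- k1) x).
    { apply RInt_ge_0; [lra|apply ex_RInt_cont, continuous_hexp|].
      intros y _. left. apply hexp_pos. }
    assert (0 < hexp (- k1) / k1) by (apply Rdiv_lt_0_compat; [apply hexp_pos|exact hk1]).
    lra.
Qed.

Lemma hmass_pos : 0 < hmass.
Proof.
  unfold hmass. pose proof (hexp_prim_pos k2).
  assert (0 < hexp k2 / k2) by (apply Rdiv_lt_0_compat; [apply hexp_pos|exact hk2]). lra.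
Qed.

Lemma hexp_lim_m_infty : is_lim hexp m_infty 0.
Proof.
  apply is_lim_spec. intros eps.
  exists (Rmin (- k1) ((ln eps - k1 ^ 2 / 2) / k1)). intros x Hx.
  pose proof (Rmin_l (- k1) ((ln eps - k1 ^ 2 / 2) / k1)).
  pose proof (Rmin_r (- k1) ((ln eps - k1 ^ 2 / 2) / k1)).
  rewrite Rminus_0_r, Rabs_pos_eq by (left; apply hexp_pos).
  rewrite hexp_left by lra. rewrite <- (exp_ln eps) by apply cond_pos.
  apply exp_increasing.
  assert (k1 * x < ln eps - k1 ^ 2 / 2); [|lra].
  replace (ln eps - k1 ^ 2 / 2) with (k1 * ((ln eps - k1 ^ 2 / 2) / k1)) by (field; lra).
  apply Rmult_lt_compat_l; lra.
Qed.

Lemma hexp_lim_p_infty : is_lim hexp p_infty 0.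
Proof.
  apply is_lim_spec. intros eps.
  exists (Rmax k2 ((k2 ^ 2 / 2 - ln eps) / k2)). intros x Hx.
  pose proof (Rmax_l k2 ((k2 ^ 2 / 2 - ln eps) / k2)).
  pose proof (Rmax_r k2 ((k2 ^ 2 / 2 - ln eps) / k2)).
  rewrite Rminus_0_r, Rabs_pos_eq by (left; apply hexp_pos).
  rewrite hexp_right by lra. rewrite <- (exp_ln eps) by apply cond_pos.
  apply exp_increasing.
  assert (k2 ^ 2 / 2 - ln eps < k2 * x); [|lra].
  replace (k2 ^ 2 / 2 - ln eps) with (k2 * ((k2 ^ 2 / 2 - ln eps) / k2)) by (field; lra).
  apply Rmult_lt_compat_l; lra.
Qed.

Lemma hexp_prim_lim_m_infty : is_lim hexp_prim m_infty 0.
Proof.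
  apply (is_lim_ext_loc (fun x => hexp x * / k1)).
  - exists (- k1). intros x Hx. rewrite hexp_prim_left by lra. reflexivity.
  - replace (Finite 0) with (Rbar_mult 0 (/ k1)) by (simpl; f_equal; ring).
    apply is_lim_scal_r, hexp_lim_m_infty.
Qed.

Lemma hexp_prim_lim_p_infty : is_lim hexp_prim p_infty hmass.
Proof.
  apply (is_lim_ext_loc (fun x => hmass + - (hexp x * / k2))).
  - exists k2. intros x Hx. rewrite hexp_prim_right by lra. reflexivity.
  - replace (Finite hmass) with (Rbar_plus hmass (Rbar_opp (Rbar_mult 0 (/ k2))))
      by (simpl; f_equal; ring).
    apply (is_lim_plus (fun _ => hmass) _ _ hmass (Rbar_opp (Rbar_mult 0 (/ k2))));
      [apply is_lim_const| |apply Rbar_plus_correct; exact I].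
    apply is_lim_opp, is_lim_scal_r, hexp_lim_p_infty.
Qed.

Lemma hconst_eq : hconst k1 k2 = ln hmass.
Proof.
  unfold hconst. f_equal. apply is_RInt_gen_unique.
  replace hmass with (hmass - 0) by ring.
  apply (is_RInt_gen_ext (Derive hexp_prim)).
  { apply filter_forall. intros ab y _. apply is_derive_unique, is_derive_hexp_prim. }
  apply is_RInt_gen_Derive.
  - apply filter_forall. intros ab y _. eexists. apply is_derive_hexp_prim.
  - apply filter_forall. intros ab y _.
    apply (continuous_ext hexp); [intros t; symmetry; apply is_derive_unique, is_derive_hexp_prim|].
    apply continuous_hexp.
  - exact hexp_prim_lim_m_infty.
  - exact hexp_prim_lim_p_infty.
Qed.

Lemma hdens_eq x : f x = hexp x / hmass.
Proof.
  unfold hdens, hexp. rewrite hconst_eq.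
  unfold Rminus. rewrite exp_plus, exp_Ropp, exp_ln by exact hmass_pos. reflexivity.
Qed.

Lemma hcdf_eq x : F x = hexp_prim x / hmass.
Proof.
  pose proof hmass_pos.
  unfold hcdf. apply is_RInt_gen_unique.
  replace (hexp_prim x / hmass) with (hexp_prim x / hmass - 0) by ring.
  apply (is_RInt_gen_ext (Derive (fun y => hexp_prim y / hmass))).
  { apply filter_forall. intros ab y _. rewrite hdens_eq.
    apply is_derive_unique. auto_derive; [eexists; apply is_derive_hexp_prim|].
    rewrite_derive (is_derive_hexp_prim y). field. lra. }
  apply is_RInt_gen_Derive.
  - apply filter_forall. intros ab y _. auto_derive. eexists; apply is_derive_hexp_prim.
  - apply filter_forall. intros ab y _.
    apply (continuous_ext (fun y => hexp y / hmass)).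
    { intros t. symmetry. apply is_derive_unique.
      auto_derive; [eexists; apply is_derive_hexp_prim|].
      rewrite_derive (is_derive_hexp_prim t). field. lra. }
    auto_continuous; [apply continuous_hexp|lra].
  - pose proof (is_lim_scal_r hexp_prim (/ hmass) m_infty 0 hexp_prim_lim_m_infty) as Hlim.
    simpl in Hlim. rewrite Rmult_0_l in Hlim. exact Hlim.
  - intros P HP. apply locally_singleton in HP. exact HP.
Qed.

Lemma hdens_pos x : 0 < f x.
Proof. rewrite hdens_eq. apply Rdiv_lt_0_compat; [apply hexp_pos|exact hmass_pos]. Qed.

Lemma is_derive_hdens x : is_derive f x (- clamp x * f x).
Proof.
  apply (is_derive_ext (fun y => hexp y / hmass)); [intros y; symmetry; apply hdens_eq|].
  pose proof hmass_pos. auto_derive; [eexists; apply is_derive_hexp|].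
  rewrite_derive (is_derive_hexp x). rewrite hdens_eq. field. lra.
Qed.

Lemma is_derive_hcdf x : is_derive F x (f x).
Proof.
  apply (is_derive_ext (fun y => hexp_prim y / hmass)); [intros y; symmetry; apply hcdf_eq|].
  pose proof hmass_pos. auto_derive; [eexists; apply is_derive_hexp_prim|].
  rewrite_derive (is_derive_hexp_prim x). rewrite hdens_eq. field. lra.
Qed.

Lemma continuous_hdens x : continuous f x.
Proof. apply (ex_derive_continuous f). eexists. apply is_derive_hdens. Qed.

Lemma continuous_hcdf x : continuous F x.
Proof. apply (ex_derive_continuous F). eexists. apply is_derive_hcdf. Qed.

Lemma hcdf_left x : x <= - k1 -> F x = f x / k1.
Proof.
  intros Hx. pose proof hmass_pos.
  rewrite hcdf_eq, hdens_eq, hexp_prim_left by exact Hx. field. split; lra.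
Qed.

Lemma hcdf_right x : k2 <= x -> 1 - F x = f x / k2.
Proof.
  intros Hx. pose proof hmass_pos.
  rewrite hcdf_eq, hdens_eq, hexp_prim_right by exact Hx. field. split; lra.
Qed.

Lemma hcdf_increasing x y : x < y -> F x < F y.
Proof.
  intros Hxy. destruct (MVT_cor2 F f x y Hxy) as [c [Hc _]].
  - intros c _. apply is_derive_Reals, is_derive_hcdf.
  - pose proof (hdens_pos c). nra.
Qed.

Lemma hcdf_lt_iff x y : F x < F y <-> x < y.
Proof.
  split; [|apply hcdf_increasing].
  intros HF. destruct (Rlt_or_le x y) as [Hxy|Hyx]; [exact Hxy|].
  destruct Hyx as [Hyx|Hyx]; [apply hcdf_increasing in Hyx|subst]; lra.
Qed.

Lemma hcdf_inj x y : F x = F y -> x = y.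
Proof.
  intros HF. destruct (Rtotal_order x y) as [Hxy|[->|Hxy]]; [|reflexivity|];
    apply hcdf_increasing in Hxy; lra.
Qed.

Lemma hcdf_bounds x : 0 < F x < 1.
Proof.
  pose proof (hdens_pos (Rmin x (- k1) - 1)). pose proof (hdens_pos (Rmax x k2 + 1)).
  pose proof (hcdf_left (Rmin x (- k1) - 1) ltac:(pose proof (Rmin_r x (- k1)); lra)).
  pose proof (hcdf_right (Rmax x k2 + 1) ltac:(pose proof (Rmax_r x k2); lra)).
  pose proof (hcdf_increasing (Rmin x (- k1) - 1) x ltac:(pose proof (Rmin_l x (- k1)); lra)).
  pose proof (hcdf_increasing x (Rmax x k2 + 1) ltac:(pose proof (Rmax_l x k2); lra)).
  assert (0 < f (Rmin x (- k1) - 1) / k1) by (apply Rdiv_lt_0_compat; assumption).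
  assert (0 < f (Rmax x k2 + 1) / k2) by (apply Rdiv_lt_0_compat; assumption).
  lra.
Qed.

Lemma hcdf_lim_m_infty : is_lim F m_infty 0.
Proof.
  apply (is_lim_ext (fun x => hexp_prim x * / hmass)); [intros x; symmetry; apply hcdf_eq|].
  replace (Finite 0) with (Rbar_mult 0 (/ hmass)) by (simpl; f_equal; ring).
  apply is_lim_scal_r, hexp_prim_lim_m_infty.
Qed.

Lemma hcdf_lim_p_infty : is_lim F p_infty 1.
Proof.
  apply (is_lim_ext (fun x => hexp_prim x * / hmass)); [intros x; symmetry; apply hcdf_eq|].
  replace (Finite 1) with (Rbar_mult hmass (/ hmass))
    by (pose proof hmass_pos; simpl; f_equal; field; lra).
  apply is_lim_scal_r, hexp_prim_lim_p_infty.
Qed.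

Lemma hcdf_surjective s : 0 < s < 1 -> exists x, F x = s.
Proof.
  intros Hs.
  destruct (proj2 (is_lim_spec _ _ _) hcdf_lim_m_infty (mkposreal s ltac:(lra))) as [M HM].
  destruct (proj2 (is_lim_spec _ _ _) hcdf_lim_p_infty (mkposreal (1 - s) ltac:(lra)))
    as [M' HM'].
  set (u := Rmin M M' - 1). set (v := Rmax M M' + 1).
  assert (Hu : F u < s).
  { specialize (HM u ltac:(unfold u; pose proof (Rmin_l M M'); lra)). simpl in HM.
    apply Rabs_def2 in HM. lra. }
  assert (Hv : s < F v).
  { specialize (HM' v ltac:(unfold v; pose proof (Rmax_r M M'); lra)). simpl in HM'.
    apply Rabs_def2 in HM'. lra. }
  assert (Huv : u < v) by (unfold u, v; pose proof (Rmin_l M M'); pose proof (Rmax_l M M'); lra).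
  destruct (IVT_gen_consistent F u v s continuous_hcdf) as [x [_ Hx]].
  - rewrite Rmin_left, Rmax_right by (left; apply hcdf_increasing, Huv). lra.
  - exists x. exact Hx.
Qed.

Lemma hcdf_hquant s : 0 < s < 1 -> F (Q s) = s.
Proof.
  intros Hs. unfold hquant. apply epsilon_spec. exact (hcdf_surjective s Hs).
Qed.

Lemma hquant_hcdf x : Q (F x) = x.
Proof. apply hcdf_inj, hcdf_hquant, hcdf_bounds. Qed.

Lemma continuous_hquant s : 0 < s < 1 -> continuous Q s.
Proof.
  intros Hs. apply continuity_pt_filterlim. intros eps Heps.
  pose proof (hcdf_hquant s Hs) as HQs.
  pose proof (hcdf_increasing (Q s) (Q s + eps) ltac:(lra)).
  pose proof (hcdf_increasing (Q s - eps) (Q s) ltac:(lra)).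
  exists (Rmin (F (Q s + eps) - s) (s - F (Q s - eps))). split; [apply Rmin_glb_lt; lra|].
  intros s' [_ Hs']. simpl in *. unfold R_dist in *.
  pose proof (Rmin_l (F (Q s + eps) - s) (s - F (Q s - eps))).
  pose proof (Rmin_r (F (Q s + eps) - s) (s - F (Q s - eps))).
  apply Rabs_def2 in Hs'.
  pose proof (hcdf_bounds (Q s + eps)). pose proof (hcdf_bounds (Q s - eps)).
  pose proof (hcdf_hquant s' ltac:(lra)) as HQs'.
  assert (Q s - eps < Q s') by (apply hcdf_lt_iff; lra).
  assert (Q s' < Q s + eps) by (apply hcdf_lt_iff; lra).
  apply Rabs_def1; lra.
Qed.

Lemma is_derive_hquant s : 0 < s < 1 -> is_derive Q s (/ f (Q s)).
Proof.
  intros Hs.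
  apply (is_derive_inverse F Q s _ (Rmin s (1 - s))).
  - apply Rmin_glb_lt; lra.
  - intros s' Hs'. apply hcdf_hquant. apply Rabs_def2 in Hs'.
    pose proof (Rmin_l s (1 - s)). pose proof (Rmin_r s (1 - s)). lra.
  - apply continuous_hquant, Hs.
  - apply is_derive_hcdf.
  - apply Rgt_not_eq, hdens_pos.
Qed.

(** * [sigma2] in quantile coordinates *)

Definition prim_hcdf x : R := RInt F 0 x.
Definition prim_x_hcdf x : R := RInt (fun y => y * F y) 0 x.

Lemma is_derive_prim_hcdf x : is_derive prim_hcdf x (F x).
Proof. apply is_derive_RInt_upper, continuous_hcdf. Qed.

Lemma is_derive_prim_x_hcdf x : is_derive prim_x_hcdf x (x * F x).
Proof.
  apply (is_derive_RInt_upper (fun y => y * F y)). intros y.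
  apply continuous_Rmult; [apply continuous_id|apply continuous_hcdf].
Qed.

Lemma continuous_prim_hcdf x : continuous prim_hcdf x.
Proof. apply (ex_derive_continuous prim_hcdf). eexists. apply is_derive_prim_hcdf. Qed.

Lemma continuous_prim_x_hcdf x : continuous prim_x_hcdf x.
Proof. apply (ex_derive_continuous prim_x_hcdf). eexists. apply is_derive_prim_x_hcdf. Qed.

Ltac solve_continuous :=
  auto_continuous;
  try match goal with
  | |- continuous (hcdf k1 k2) _ => apply continuous_hcdf
  | |- continuous (fun x => hcdf k1 k2 x) _ => apply continuous_hcdf
  | |- continuous (hdens k1 k2) _ => apply continuous_hdens
  | |- continuous (fun x => hdens k1 k2 x) _ => apply continuous_hdens
  | |- continuous prim_hcdf _ => apply continuous_prim_hcdf
  | |- continuous (fun x => prim_hcdf x) _ => apply continuous_prim_hcdf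
  | |- continuous prim_x_hcdf _ => apply continuous_prim_x_hcdf
  | |- continuous (fun x => prim_x_hcdf x) _ => apply continuous_prim_x_hcdf
  end.

Ltac solve_ex_derive :=
  repeat match goal with
  | |- _ /\ _ => split
  | |- True => exact I
  | |- ex_derive (fun x => prim_hcdf x) ?y => exists (F y); apply is_derive_prim_hcdf
  | |- ex_derive (fun x => prim_x_hcdf x) ?y => exists (y * F y); apply is_derive_prim_x_hcdf
  | |- ex_derive (fun x => hdens k1 k2 x) ?y => exists (- clamp y * f y); apply is_derive_hdens
  | |- ex_derive (fun x => hcdf k1 k2 x) ?y => exists (f y); apply is_derive_hcdf
  | |- ex_derive (fun x => hquant k1 k2 x) ?y => exists (/ f (Q y)); apply is_derive_hquant; lra
  | |- _ * _ <> 0 => apply Rmult_integral_contrapositive_currified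
  | |- 1 <> 0 => exact R1_neq_R0
  | |- hdens k1 k2 _ <> 0 => apply Rgt_not_eq, hdens_pos
  end.

Ltac rewrite_derives :=
  repeat match goal with
  | |- context [Derive (fun x => prim_hcdf x) ?y] => rewrite_derive (is_derive_prim_hcdf y)
  | |- context [Derive (fun x => prim_x_hcdf x) ?y] => rewrite_derive (is_derive_prim_x_hcdf y)
  | |- context [Derive (fun x => hdens k1 k2 x) ?y] => rewrite_derive (is_derive_hdens y)
  | |- context [Derive (fun x => hcdf k1 k2 x) ?y] => rewrite_derive (is_derive_hcdf y)
  | |- context [Derive (fun x => hquant k1 k2 x) ?y] =>
      rewrite_derive (is_derive_hquant y ltac:(lra))
  end.

(* [sigma2_num l u] is the double integral of [min (F x) (F y) - F x * F y] over [[l, u]^2]. *)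
Definition sigma2_num l u :=
  2 * u * (prim_hcdf u - prim_hcdf l) - 2 * (prim_x_hcdf u - prim_x_hcdf l)
  - (prim_hcdf u - prim_hcdf l) ^ 2.

Lemma RInt_hcdf_subst (phi : R -> R) l u : l <= u ->
  (forall y, l <= y <= u -> continuous phi (F y)) ->
  RInt (fun t => phi t / f (Q t)) (F l) (F u) = RInt (fun y => phi (F y)) l u :> R.
Proof.
  intros Hlu Hphi.
  rewrite <- (RInt_comp (fun t => phi t / f (Q t)) F f).
  - apply RInt_ext_R. intros y _. rewrite hquant_hcdf.
    pose proof (hdens_pos y). unfold scal; simpl; unfold mult; simpl. field. lra.
  - intros y Hy. rewrite Rmin_left, Rmax_right in Hy by exact Hlu.
    apply continuous_Rdiv; [apply Hphi, Hy| |apply Rgt_not_eq, hdens_pos].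
    apply (continuous_comp Q f); [apply continuous_hquant, hcdf_bounds|apply continuous_hdens].
  - intros y _. split; [apply is_derive_hcdf|apply continuous_hdens].
Qed.

Definition kernel_int l u s : R := RInt (fun y => Rmin s (F y) - s * F y) l u.

Lemma continuous_kernel s y : continuous (fun y => Rmin s (F y) - s * F y) y.
Proof.
  apply continuous_Rminus; [|solve_continuous].
  apply (continuous_comp F (fun t => Rmin s t)); [apply continuous_hcdf|apply continuous_Rmin_l].
Qed.

Lemma kernel_int_hcdf l u x : l <= x <= u ->
  kernel_int l u (F x)
  = prim_hcdf x - prim_hcdf l + (u - x) * F x - F x * (prim_hcdf u - prim_hcdf l).
Proof.
  intros Hx. unfold kernel_int. set (c := F x).
  rewrite <- (RInt_Chasles _ l x u) by (apply ex_RInt_cont, continuous_kernel).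
  rewrite (RInt_ext_R _ (fun y => F y - c * F y) l x).
  2: { intros y Hy. rewrite Rmin_left, Rmax_right in Hy by lra.
       rewrite Rmin_right; [reflexivity|]. left. apply hcdf_increasing. lra. }
  rewrite (RInt_ext_R _ (fun y => c - c * F y) x u).
  2: { intros y Hy. rewrite Rmin_left, Rmax_right in Hy by lra.
       rewrite Rmin_left; [reflexivity|]. left. apply hcdf_increasing. lra. }
  rewrite (RInt_antiderivative (fun y => prim_hcdf y - c * prim_hcdf y)).
  rewrite (RInt_antiderivative (fun y => c * y - c * prim_hcdf y)).
  - unfold plus; simpl. ring.
  - intros y _. auto_derive; [solve_ex_derive|]. rewrite_derives. ring.
  - intros y _. solve_continuous.
  - intros y _. auto_derive; [solve_ex_derive|]. rewrite_derives. ring.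
  - intros y _. solve_continuous.
Qed.

Lemma continuous_kernel_int l u s : l <= u -> continuous (kernel_int l u) s.
Proof.
  intros Hlu. apply continuous_of_lipschitz with (2 * (u - l)). intros s'.
  unfold kernel_int. rewrite <- RInt_Rminus by (apply ex_RInt_cont, continuous_kernel).
  replace (2 * (u - l) * Rabs (s' - s)) with ((u - l) * (2 * Rabs (s' - s))) by ring.
  apply abs_RInt_le_const; [exact Hlu| |].
  - apply ex_RInt_cont. intros y. apply continuous_Rminus; apply continuous_kernel.
  - intros y _. pose proof (hcdf_bounds y).
    replace (Rmin s' (F y) - s' * F y - (Rmin s (F y) - s * F y))
      with ((Rmin s' (F y) - Rmin s (F y)) - (s' - s) * F y) by ring.
    unfold Rmin. destruct (Rle_dec s' (F y)), (Rle_dec s (F y)); unfold Rabs;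
      repeat destruct Rcase_abs; nra.
Qed.

Lemma RInt_kernel_int l u : l <= u ->
  RInt (fun x => kernel_int l u (F x)) l u = sigma2_num l u :> R.
Proof.
  intros Hlu.
  transitivity (RInt (fun x => prim_hcdf x - prim_hcdf l + (u - x) * F x
                               - F x * (prim_hcdf u - prim_hcdf l)) l u).
  { apply RInt_ext_R. intros x Hx. rewrite Rmin_left, Rmax_right in Hx by exact Hlu.
    apply kernel_int_hcdf. lra. }
  rewrite (RInt_antiderivative
             (fun x => x * prim_hcdf x - 2 * prim_x_hcdf x - x * prim_hcdf l
                       + u * prim_hcdf x - (prim_hcdf u - prim_hcdf l) * prim_hcdf x)).
  - unfold sigma2_num. ring.
  - intros y _. auto_derive; [solve_ex_derive|]. rewrite_derives. ring.
  - intros y _. solve_continuous.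
Qed.

Lemma sigma2_eq a b : 0 < a -> 0 < b -> a + b < 1 ->
  sigma2 k1 k2 a b = sigma2_num (Q a) (Q (1 - b)) / (1 - a - b) ^ 2.
Proof.
  intros Ha Hb Hab. unfold sigma2.
  set (l := Q a). set (u := Q (1 - b)).
  assert (Fl : F l = a) by (apply hcdf_hquant; lra).
  assert (Fu : F u = 1 - b) by (apply hcdf_hquant; lra).
  assert (Hlu : l <= u) by (left; apply hcdf_lt_iff; lra).
  assert (Hinner : forall s,
    RInt (fun t => (Rmin s t - s * t) / (f (Q s) * f (Q t))) a (1 - b)
    = kernel_int l u s / f (Q s) :> R).
  { intros s. pose proof (hdens_pos (Q s)). rewrite <- Fl, <- Fu.
    rewrite (RInt_ext_R (fun t => (Rmin s t - s * t) / (f (Q s) * f (Q t)))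
                        (fun t => ((Rmin s t - s * t) / f (Q s)) / f (Q t))).
    2: { intros t _. pose proof (hdens_pos (Q t)). field. lra. }
    rewrite (RInt_hcdf_subst (fun t => (Rmin s t - s * t) / f (Q s)) l u Hlu).
    2: { intros y _. apply continuous_Rdiv; [|apply continuous_const|lra].
         apply continuous_Rminus; [apply continuous_Rmin_l|solve_continuous]. }
    unfold kernel_int.
    rewrite (RInt_ext_R (fun y => (Rmin s (F y) - s * F y) / f (Q s))
                        (fun y => / f (Q s) * (Rmin s (F y) - s * F y)))
      by (intros y _; field; lra).
    rewrite RInt_Rmult_l by (apply ex_RInt_cont, continuous_kernel).
    field. lra. }
  rewrite (RInt_ext_R _ (fun s => kernel_int l u s / f (Q s))) by (intros s _; apply Hinner).
  replace (RInt (fun s => kernel_int l u s / f (Q s)) a (1 - b)) with (sigma2_num l u).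
  { unfold Rdiv. ring. }
  rewrite <- Fl, <- Fu.
  rewrite (RInt_hcdf_subst (kernel_int l u) l u Hlu)
    by (intros y _; apply continuous_kernel_int, Hlu).
  symmetry. apply RInt_kernel_int, Hlu.
Qed.

(** * Second derivatives of [sigma2] along segments *)

Definition int_F a b := prim_hcdf (Q (1 - b)) - prim_hcdf (Q a).
Definition int_1F a b := Q (1 - b) - Q a - int_F a b.

Definition N a b := sigma2_num (Q a) (Q (1 - b)).
Definition N_a a b := -2 * a * int_1F a b / f (Q a).
Definition N_b a b := -2 * b * int_F a b / f (Q (1 - b)).
Definition N_aa a b :=
  -2 * int_1F a b / f (Q a) - 2 * a * clamp (Q a) * int_1F a b / f (Q a) ^ 2
  + 2 * a * (1 - a) / f (Q a) ^ 2.
Definition N_bb a b :=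
  -2 * int_F a b / f (Q (1 - b)) + 2 * b * clamp (Q (1 - b)) * int_F a b / f (Q (1 - b)) ^ 2
  + 2 * b * (1 - b) / f (Q (1 - b)) ^ 2.
Definition N_ab a b := 2 * a * b / (f (Q a) * f (Q (1 - b))).

Section Line.

Variables a b da db : R.

Local Notation at_line h t := (h (a + t * da) (b + t * db)).

Ltac line_derive t :=
  intros [Ha [Hb Hab]];
  pose proof (hdens_pos (Q (a + t * da))); pose proof (hdens_pos (Q (1 - (b + t * db))));
  auto_derive; [solve_ex_derive|];
  change (1 + - (b + t * db)) with (1 - (b + t * db));
  rewrite_derives; rewrite !hcdf_hquant by lra;
  field; split; lra.

Lemma is_derive_N_line t : trim_admissible (a + t * da) (b + t * db) ->
  is_derive (fun t => at_line N t) t (da * at_line N_a t + db * at_line N_b t).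
Proof.
  unfold N, sigma2_num, N_a, N_b, int_1F, int_F. line_derive t.
Qed.

Lemma is_derive_N_a_line t : trim_admissible (a + t * da) (b + t * db) ->
  is_derive (fun t => at_line N_a t) t (da * at_line N_aa t + db * at_line N_ab t).
Proof.
  unfold N_a, N_aa, N_ab, int_1F, int_F. line_derive t.
Qed.

Lemma is_derive_N_b_line t : trim_admissible (a + t * da) (b + t * db) ->
  is_derive (fun t => at_line N_b t) t (da * at_line N_ab t + db * at_line N_bb t).
Proof.
  unfold N_b, N_bb, N_ab, int_F. line_derive t.
Qed.

End Line.

(* The second partial derivatives of [N a b / (1 - a - b) ^ 2], that is, of [sigma2]. *)
Definition S_aa a b :=
  N_aa a b / (1 - a - b) ^ 2 + 4 * N_a a b / (1 - a - b) ^ 3 + 6 * N a b / (1 - a - b) ^ 4.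
Definition S_bb a b :=
  N_bb a b / (1 - a - b) ^ 2 + 4 * N_b a b / (1 - a - b) ^ 3 + 6 * N a b / (1 - a - b) ^ 4.
Definition S_ab a b :=
  N_ab a b / (1 - a - b) ^ 2 + 2 * (N_a a b + N_b a b) / (1 - a - b) ^ 3
  + 6 * N a b / (1 - a - b) ^ 4.

Definition hess_form a b da db :=
  da ^ 2 * S_aa a b + 2 * da * db * S_ab a b + db ^ 2 * S_bb a b.

Lemma sigma2_segment_convex a1 b1 a2 b2 t : 0 < t < 1 ->
  (forall s, 0 <= s <= 1 ->
     trim_admissible (a2 + s * (a1 - a2)) (b2 + s * (b1 - b2)) /\
     0 < hess_form (a2 + s * (a1 - a2)) (b2 + s * (b1 - b2)) (a1 - a2) (b1 - b2)) ->
  sigma2 k1 k2 (t * a1 + (1 - t) * a2) (t * b1 + (1 - t) * b2)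
    < t * sigma2 k1 k2 a1 b1 + (1 - t) * sigma2 k1 k2 a2 b2.
Proof.
  intros Ht Hseg. set (da := a1 - a2) in Hseg. set (db := b1 - b2) in Hseg.
  set (D s := 1 - (a2 + s * da) - (b2 + s * db)).
  set (n s := N (a2 + s * da) (b2 + s * db)).
  set (n' s := da * N_a (a2 + s * da) (b2 + s * db) + db * N_b (a2 + s * da) (b2 + s * db)).
  assert (Hsigma : forall s, 0 <= s <= 1 ->
            sigma2 k1 k2 (a2 + s * da) (b2 + s * db) = n s / D s ^ 2).
  { intros s Hs. destruct (Hseg s Hs) as [[Ha [Hb Hab]] _]. apply sigma2_eq; assumption. }
  replace (t * a1 + (1 - t) * a2) with (a2 + t * da) by (unfold da; ring).
  replace (t * b1 + (1 - t) * b2) with (b2 + t * db) by (unfold db; ring).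
  replace (sigma2 k1 k2 a1 b1) with (sigma2 k1 k2 (a2 + 1 * da) (b2 + 1 * db))
    by (f_equal; unfold da, db; ring).
  replace (sigma2 k1 k2 a2 b2) with (sigma2 k1 k2 (a2 + 0 * da) (b2 + 0 * db)) by (f_equal; ring).
  rewrite !Hsigma by lra.
  apply (convex_strict_of_derive2_pos (fun s => n s / D s ^ 2)
           (fun s => n' s / D s ^ 2 + 2 * (da + db) * n s / D s ^ 3)
           (fun s => hess_form (a2 + s * da) (b2 + s * db) da db)); [exact Ht|].
  intros s Hs. destruct (Hseg s Hs) as [Hadm Hpos].
  assert (HD : is_derive D s (- (da + db))) by (unfold D; auto_derive; [exact I|ring]).
  assert (HD0 : D s <> 0) by (destruct Hadm as [? [? ?]]; unfold D; lra).
  assert (Hn : is_derive n s (n' s)) by (apply is_derive_N_line, Hadm).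
  split; [|split; [|exact Hpos]].
  - exact (is_derive_div_sq n D (n' s) (da + db) s Hn HD HD0).
  - replace (hess_form (a2 + s * da) (b2 + s * db) da db)
      with ((da * (da * N_aa (a2 + s * da) (b2 + s * db) + db * N_ab (a2 + s * da) (b2 + s * db))
             + db * (da * N_ab (a2 + s * da) (b2 + s * db) + db * N_bb (a2 + s * da) (b2 + s * db)))
              / D s ^ 2 + 4 * (da + db) * n' s / D s ^ 3 + 6 * (da + db) ^ 2 * n s / D s ^ 4).
    + apply (is_derive_div_sq_2 n n' D); [exact Hn| |exact HD|exact HD0].
      apply is_derive_lin_comb; [apply is_derive_N_a_line|apply is_derive_N_b_line]; exact Hadm.
    + unfold hess_form, S_aa, S_bb, S_ab, n', n, D. field. exact HD0.
Qed.

(** * The Hessian of [sigma2] near [(F (- k1), 1 - F k2)] *)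

Definition alpha_star := F (- k1).
Definition beta_star := 1 - F k2.

Lemma hquant_alpha_star : Q alpha_star = - k1.
Proof. apply hquant_hcdf. Qed.

Lemma hquant_beta_star : Q (1 - beta_star) = k2.
Proof. unfold beta_star. replace (1 - (1 - F k2)) with (F k2) by ring. apply hquant_hcdf. Qed.

Lemma alpha_star_eq : alpha_star = f (- k1) / k1.
Proof. apply hcdf_left. lra. Qed.

Lemma beta_star_eq : beta_star = f k2 / k2.
Proof. apply hcdf_right. lra. Qed.

Lemma star_width : 1 - alpha_star - beta_star = F k2 - F (- k1).
Proof. unfold alpha_star, beta_star. ring. Qed.

Lemma star_width_pos : 0 < 1 - alpha_star - beta_star.
Proof. rewrite star_width. pose proof (hcdf_increasing (- k1) k2 ltac:(lra)). lra. Qed.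

Lemma RInt_central (phi Phi : R -> R) :
  (forall x, - k1 <= x <= k2 -> is_derive Phi x (phi x)) -> (forall x, continuous phi x) ->
  RInt phi (- k1) k2 = Phi k2 - Phi (- k1) :> R.
Proof.
  intros HPhi Hphi. apply RInt_antiderivative; [|intros; apply Hphi].
  intros x Hx. rewrite Rmin_left, Rmax_right in Hx by lra. apply HPhi, Hx.
Qed.

Ltac central_derive :=
  intros x Hx; auto_derive; [solve_ex_derive|];
  rewrite_derives; rewrite clamp_mid by exact Hx; field.

(* On [[-k1, k2]] the density satisfies [f' = - x f], so its moments of order
   at most two integrate in closed form. *)
Lemma RInt_hdens_central : RInt f (- k1) k2 = F k2 - F (- k1) :> R.
Proof.
  apply RInt_central; [|apply continuous_hdens].
  intros x _. apply is_derive_hcdf.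
Qed.

Lemma RInt_x_hdens_central : RInt (fun x => x * f x) (- k1) k2 = f (- k1) - f k2 :> R.
Proof.
  rewrite (RInt_central _ (fun x => - f x)); [ring|central_derive|intros; solve_continuous].
Qed.

Lemma RInt_x2_hdens_central :
  RInt (fun x => x ^ 2 * f x) (- k1) k2 = F k2 - F (- k1) - k1 * f (- k1) - k2 * f k2 :> R.
Proof.
  rewrite (RInt_central _ (fun x => F x - x * f x)); [ring|central_derive|intros; solve_continuous].
Qed.

Lemma hdens_moment_ineq :
  (f (- k1) - f k2) ^ 2
    < (F k2 - F (- k1)) * (F k2 - F (- k1) - k1 * f (- k1) - k2 * f k2).
Proof.
  rewrite <- RInt_x_hdens_central, <- RInt_x2_hdens_central, <- RInt_hdens_central.
  apply RInt_cauchy_schwarz_strict; [lra|apply continuous_hdens|apply hdens_pos].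
Qed.

Lemma prim_hcdf_star : prim_hcdf k2 - prim_hcdf (- k1) = k2.
Proof.
  transitivity (RInt F (- k1) k2).
  - symmetry. apply RInt_central; [intros x _; apply is_derive_prim_hcdf|apply continuous_hcdf].
  - rewrite (RInt_central _ (fun x => x * F x + f x)); [|central_derive|apply continuous_hcdf].
    rewrite (hcdf_left (- k1)) by lra.
    replace (F k2) with (1 - f k2 / k2) by (rewrite <- hcdf_right by lra; ring).
    field. lra.
Qed.

Lemma prim_x_hcdf_star :
  prim_x_hcdf k2 - prim_x_hcdf (- k1) = (k2 ^ 2 - (1 - alpha_star - beta_star)) / 2.
Proof.
  transitivity (RInt (fun x => x * F x) (- k1) k2).
  - symmetry.
    apply RInt_central; [intros x _; apply is_derive_prim_x_hcdf|intros; solve_continuous].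
  - rewrite (RInt_central _ (fun x => ((x ^ 2 - 1) * F x + x * f x) / 2));
      [|central_derive|intros; solve_continuous].
    rewrite star_width, (hcdf_left (- k1)) by lra.
    replace (F k2) with (1 - f k2 / k2) by (rewrite <- hcdf_right by lra; ring).
    field. lra.
Qed.

Lemma N_star : N alpha_star beta_star = 1 - alpha_star - beta_star.
Proof.
  unfold N, sigma2_num.
  rewrite hquant_alpha_star, hquant_beta_star, prim_hcdf_star, prim_x_hcdf_star.
  field.
Qed.

Lemma hessian_star_entries :
  let p := f (- k1) in let q := f k2 in let D := 1 - alpha_star - beta_star in
  S_aa alpha_star beta_star = 2 / D ^ 2 * ((1 - p / k1) / (k1 * p) - 1 / D) /\
  S_bb alpha_star beta_star = 2 / D ^ 2 * ((1 - q / k2) / (k2 * q) - 1 / D) /\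
  S_ab alpha_star beta_star = 2 / D ^ 2 * (1 / (k1 * k2) - 1 / D).
Proof.
  intros p q D.
  assert (0 < p) by apply hdens_pos. assert (0 < q) by apply hdens_pos.
  assert (0 < D) by apply star_width_pos.
  assert (EI0 : int_F alpha_star beta_star = k2).
  { unfold int_F. rewrite hquant_alpha_star, hquant_beta_star. apply prim_hcdf_star. }
  assert (EI1 : int_1F alpha_star beta_star = k1).
  { unfold int_1F. rewrite EI0, hquant_alpha_star, hquant_beta_star. ring. }
  assert (Ha := alpha_star_eq). assert (Hb := beta_star_eq). fold p q in Ha, Hb.
  repeat split.
  - unfold S_aa, N_aa, N_a. rewrite EI1, N_star, hquant_alpha_star, clamp_left by lra.
    fold p D. rewrite Ha. field. repeat split; lra.
  - unfold S_bb, N_bb, N_b. rewrite EI0, N_star, hquant_beta_star, clamp_right by lra.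
    fold q D. rewrite Hb. field. repeat split; lra.
  - unfold S_ab, N_ab, N_a, N_b.
    rewrite EI0, EI1, N_star, hquant_alpha_star, hquant_beta_star.
    fold p q D. rewrite Ha, Hb. field. repeat split; lra.
Qed.

Lemma hessian_star_pos_def :
  0 < S_aa alpha_star beta_star /\ 0 < S_bb alpha_star beta_star /\
  S_ab alpha_star beta_star ^ 2 < S_aa alpha_star beta_star * S_bb alpha_star beta_star.
Proof.
  destruct hessian_star_entries as [-> [-> ->]].
  pose proof (hdens_pos (- k1)) as Hp. pose proof (hdens_pos k2) as Hq.
  pose proof star_width_pos as HD.
  assert (Hsum : f (- k1) / k1 + (1 - alpha_star - beta_star) + f k2 / k2 = 1)
    by (rewrite <- alpha_star_eq, <- beta_star_eq; ring).
  assert (Hcs := hdens_moment_ineq). rewrite <- star_width in Hcs.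
  destruct (star_form_pos_def k1 k2 _ _ _ hk1 hk2 Hp Hq HD Hsum Hcs) as [Hx [Hy Hxy]].
  set (c := 2 / (1 - alpha_star - beta_star) ^ 2).
  assert (Hc : 0 < c) by (apply Rdiv_lt_0_compat; [lra|apply pow_lt, HD]).
  split; [apply Rmult_lt_0_compat; assumption|].
  split; [apply Rmult_lt_0_compat; assumption|].
  pose proof (pow_lt c 2 Hc). rewrite Rpow_mult_distr. nra.
Qed.

Lemma star_in_unit : 0 < alpha_star < 1 /\ 0 < 1 - beta_star < 1.
Proof.
  unfold alpha_star, beta_star. replace (1 - (1 - F k2)) with (F k2) by ring.
  split; apply hcdf_bounds.
Qed.

Ltac solve_continuous_star :=
  repeat first
    [ progress auto_continuous
    | match goal with
      | |- continuous (fun p => ?g (hquant k1 k2 (@?h p))) _ =>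
          apply (continuous_comp (fun p => hquant k1 k2 (h p)) g)
      | |- continuous (fun p => hquant k1 k2 (@?h p)) _ =>
          apply (continuous_comp h (hquant k1 k2));
          [|apply continuous_hquant; cbn [fst snd]; lra]
      | |- continuous clamp _ => apply continuous_clamp
      | |- continuous prim_hcdf _ => apply continuous_prim_hcdf
      | |- continuous prim_x_hcdf _ => apply continuous_prim_x_hcdf
      | |- continuous (hdens k1 k2) _ => apply continuous_hdens
      | |- _ <> 0 =>
          cbn [fst snd];
          repeat first [ apply pow_nonzero | apply Rmult_integral_contrapositive_currified
                       | apply Rgt_not_eq, hdens_pos | lra ]
      end ].

Lemma continuous_hessian_star :
  continuous (fun p => S_aa (fst p) (snd p)) (alpha_star, beta_star) /\
  continuous (fun p => S_bb (fst p) (snd p)) (alpha_star, beta_star) /\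
  continuous (fun p => S_ab (fst p) (snd p)) (alpha_star, beta_star).
Proof.
  pose proof star_in_unit. pose proof star_width_pos.
  unfold S_aa, S_bb, S_ab, N_aa, N_bb, N_ab, N_a, N_b, N, sigma2_num, int_1F, int_F.
  repeat split; solve_continuous_star.
Qed.

Lemma hessian_entries_near_star eta : 0 < eta ->
  exists del, 0 < del /\
    forall a b, Rabs (a - alpha_star) < del -> Rabs (b - beta_star) < del ->
      trim_admissible a b /\
      Rabs (S_aa a b - S_aa alpha_star beta_star) < eta /\
      Rabs (S_bb a b - S_bb alpha_star beta_star) < eta /\
      Rabs (S_ab a b - S_ab alpha_star beta_star) < eta.
Proof.
  intros Heta. destruct continuous_hessian_star as [Caa [Cbb Cab]].
  destruct (continuous2_box _ _ _ eta Caa Heta) as [d1 [Hd1 B1]].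
  destruct (continuous2_box _ _ _ eta Cbb Heta) as [d2 [Hd2 B2]].
  destruct (continuous2_box _ _ _ eta Cab Heta) as [d3 [Hd3 B3]].
  cbn [fst snd] in B1, B2, B3.
  pose proof star_in_unit. pose proof star_width_pos.
  set (r := Rmin (Rmin (alpha_star / 2) (beta_star / 2)) ((1 - alpha_star - beta_star) / 4)).
  assert (Hr : 0 < r /\ r <= alpha_star / 2 /\ r <= beta_star / 2
               /\ r <= (1 - alpha_star - beta_star) / 4).
  { unfold r. pose proof (Rmin_l (alpha_star / 2) (beta_star / 2)).
    pose proof (Rmin_r (alpha_star / 2) (beta_star / 2)).
    pose proof (Rmin_l (Rmin (alpha_star / 2) (beta_star / 2)) ((1 - alpha_star - beta_star) / 4)).
    pose proof (Rmin_r (Rmin (alpha_star / 2) (beta_star / 2)) ((1 - alpha_star - beta_star) / 4)).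
    split; [repeat apply Rmin_glb_lt; lra|lra]. }
  exists (Rmin (Rmin d1 d2) (Rmin d3 r)).
  split; [repeat apply Rmin_glb_lt; lra|].
  pose proof (Rmin_l (Rmin d1 d2) (Rmin d3 r)). pose proof (Rmin_r (Rmin d1 d2) (Rmin d3 r)).
  pose proof (Rmin_l d1 d2). pose proof (Rmin_r d1 d2).
  pose proof (Rmin_l d3 r). pose proof (Rmin_r d3 r).
  intros a b Ha Hb.
  pose proof (Rabs_def2 _ _ Ha). pose proof (Rabs_def2 _ _ Hb).
  split; [unfold trim_admissible; lra|].
  split; [apply B1; lra|]. split; [apply B2; lra|]. apply B3; lra.
Qed.

Lemma hessian_pos_near_star :
  exists eps mu, 0 < eps /\ 0 < mu /\
    forall a b, Rabs (a - alpha_star) < eps -> Rabs (b - beta_star) < eps ->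
      trim_admissible a b /\ forall da db, mu * (da ^ 2 + db ^ 2) <= hess_form a b da db.
Proof.
  destruct hessian_star_pos_def as [Haa [Hbb Hab]].
  set (mu := (S_aa alpha_star beta_star * S_bb alpha_star beta_star - S_ab alpha_star beta_star ^ 2)
             / (S_aa alpha_star beta_star + S_bb alpha_star beta_star)).
  assert (Hmu : 0 < mu) by (apply Rdiv_lt_0_compat; lra).
  destruct (hessian_entries_near_star (mu / 4) ltac:(lra)) as [eps [Heps Hnear]].
  exists eps, (mu / 2). split; [exact Heps|]. split; [lra|].
  intros a b Ha Hb. destruct (Hnear a b Ha Hb) as [Hadm [B1 [B2 B3]]].
  split; [exact Hadm|]. intros da db.
  pose proof (quad_form_lower_bound _ _ _ da db Haa Hbb Hab) as Hlow. fold mu in Hlow.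
  pose proof (quad_form_perturb _ _ _ _ _ _ (mu / 4) da db B1 B2 B3) as Hpert.
  pose proof (pow2_ge_0 da). pose proof (pow2_ge_0 db).
  unfold hess_form. lra.
Qed.

End Huber.

Theorem mainTheorem7 (k1 k2 : R) (hk1 : 0 < k1) (hk2 : 0 < k2) :
  exists eps : R, 0 < eps /\
    forall (a1 b1 a2 b2 t : R),
      Rabs (a1 - hcdf k1 k2 (- k1)) < eps ->
      Rabs (b1 - (1 - hcdf k1 k2 k2)) < eps ->
      Rabs (a2 - hcdf k1 k2 (- k1)) < eps ->
      Rabs (b2 - (1 - hcdf k1 k2 k2)) < eps ->
      (a1, b1) <> (a2, b2) ->
      0 < t < 1 ->
      sigma2 k1 k2 (t * a1 + (1 - t) * a2) (t * b1 + (1 - t) * b2)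
        < t * sigma2 k1 k2 a1 b1 + (1 - t) * sigma2 k1 k2 a2 b2.
Proof.
  destruct (hessian_pos_near_star k1 k2 hk1 hk2) as (eps & mu & Heps & Hmu & Hnear).
  exists eps. split; [exact Heps|].
  intros a1 b1 a2 b2 t Ha1 Hb1 Ha2 Hb2 Hne Ht.
  apply sigma2_segment_convex; [exact hk1|exact hk2|exact Ht|].
  intros s Hs.
  destruct (Hnear (a2 + s * (a1 - a2)) (b2 + s * (b1 - b2))) as [Hadm Hhess];
    [apply Rabs_convex_comb_lt; assumption..|].
  split; [exact Hadm|].
  eapply Rlt_le_trans; [|apply Hhess].
  apply Rmult_lt_0_compat; [exact Hmu|apply sum_sq_sub_pos, Hne].
Qed.
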